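(* Let $A$ be a strongly indecomposable torsion-free Abelian group of finite rank with $A=\mathrm{PSoc}\,A$. Then $\mathrm{End}\,A$ is centrally essential if and only if $\mathrm{End}\,A$ is commutative.
   Context: All rings are associative with non-zero identity. A ring $R$ is centrally essential if for every non-zero $a\in R$ there exist non-zero elements $x,y$ of the center of $R$ with $ax=y$. For torsion-free Abelian groups $B,D$, $B\doteq D$ means $nB\subseteq D$ and $mD\subseteq B$ for some positive integers $n,m$; a torsion-free group $A$ is strongly indecomposable if it has no quasi-decomposition $A\doteq B\oplus D$ with $B,D$ non-zero. The pseudo-socle $\mathrm{PSoc}\,A$ is the pure subgroup of $A$ generated by all minimal non-zero pure fully invariant subgroups of $A$. *)

From HB Require Import structures.
From mathcomp Require Import all_boot all_order all_algebra.
Set Implicit Arguments. Unset Strict Implicit. Unset Printing Implicit Defensive.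
Import GRing.Theory.
Local Open Scope ring_scope.

(* Abelian groups are zmodTypes; subgroups are Prop-valued predicates;
   End A is the set of additive maps {additive A -> A} with composition. *)

Definition torsion_free (A : zmodType) : Prop :=
  forall (n : nat) (x : A), (0 < n)%N -> x *+ n = 0 -> x = 0.

Definition finite_rank (A : zmodType) : Prop :=
  exists s : seq A, forall x : A, exists n : nat, (0 < n)%N /\
    exists c : 'I_(size s) -> int, x *+ n = \sum_(i < size s) s`_i *~ c i.

Definition subgroup (A : zmodType) (B : A -> Prop) : Prop :=
  B 0 /\ (forall x y, B x -> B y -> B (x - y)).

Definition nonzero_sub (A : zmodType) (B : A -> Prop) : Prop :=
  exists x, B x /\ x != 0.

(* B is pure in A: nB = B ∩ nA for all n *)
Definition pure (A : zmodType) (B : A -> Prop) : Prop :=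
  subgroup B /\ forall (n : nat) (x : A), B (x *+ n) ->
    exists b, B b /\ x *+ n = b *+ n.

Definition fully_invariant (A : zmodType) (B : A -> Prop) : Prop :=
  subgroup B /\ forall (f : {additive A -> A}) x, B x -> B (f x).

Definition min_pure_fi (A : zmodType) (B : A -> Prop) : Prop :=
  pure B /\ fully_invariant B /\ nonzero_sub B /\
  forall C : A -> Prop, pure C -> fully_invariant C -> nonzero_sub C ->
    (forall x, C x -> B x) -> forall x, B x -> C x.

(* pseudo-socle: the pure subgroup generated by all minimal non-zero pure
   fully invariant subgroups (smallest pure subgroup containing them) *)
Definition PSoc (A : zmodType) : A -> Prop :=
  fun x => forall C : A -> Prop, pure C ->
    (forall B : A -> Prop, min_pure_fi B -> forall y, B y -> C y) -> C x.

Definition quasi_decomposable (A : zmodType) : Prop :=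
  exists B D : A -> Prop, subgroup B /\ subgroup D /\
    nonzero_sub B /\ nonzero_sub D /\
    (forall x, B x -> D x -> x = 0) /\
    exists n : nat, (0 < n)%N /\
      forall x : A, exists b d, B b /\ D d /\ x *+ n = b + d.

Definition strongly_indecomposable (A : zmodType) : Prop :=
  ~ quasi_decomposable A.

Definition end_nonzero (A : zmodType) (f : {additive A -> A}) : Prop :=
  exists x, f x != 0.

Definition end_central (A : zmodType) (f : {additive A -> A}) : Prop :=
  forall g : {additive A -> A}, f \o g =1 g \o f.

Definition End_commutative (A : zmodType) : Prop :=
  forall f g : {additive A -> A}, f \o g =1 g \o f.

Definition End_centrally_essential (A : zmodType) : Prop :=
  forall a : {additive A -> A}, end_nonzero a ->
    exists x y : {additive A -> A}, end_central x /\ end_central y /\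
      end_nonzero x /\ end_nonzero y /\ a \o x =1 y.

(* Everything rests on injectivity of a nonzero central endomorphism x: then
   from f x = y with x, y central one gets x (f g - g f) = y g - g y = 0,
   so End A is commutative.  As A has finite rank, x is a root of some
   nonzero p = q X^a in Z[X] with q(0) <> 0.  Since X^(a+1) and q generate a
   nonzero integer N, A is quasi-equal to ker x^(a+1) (+) ker q(x), and strong
   indecomposability kills one summand.  If ker q(x) = 0 then x is nilpotent.
   But a minimal pure fully invariant subgroup B not killed by x is the pure
   closure of x B, so A = PSoc A puts x A into the pure closure of x^2 A,
   which is incompatible with nilpotency unless x = 0. *)

From HB Require Import structures.
From mathcomp Require Import all_boot all_order all_algebra.
From Stdlib Require Import Classical ClassicalEpsilon.
Set Implicit Arguments. Unset Strict Implicit. Unset Printing Implicit Defensive.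
Import GRing.Theory Num.Theory.
Local Open Scope ring_scope.

Section PolyAt.
Variables (A : zmodType) (x : {additive A -> A}).

Lemma iter_zmod_morphism n : zmod_morphism (iter n x).
Proof. by elim: n => // n IH u v; rewrite /= IH raddfB. Qed.

HB.instance Definition _ n :=
  GRing.isZmodMorphism.Build A A (iter n x) (iter_zmod_morphism n).

(* p(x), evaluated by hand: additive endomorphisms carry no ring structure
   in the library. *)
Definition poly_at (p : {poly int}) (v : A) : A :=
  \sum_(i < size p) iter i x v *~ p`_i.

Lemma poly_at_zmod_morphism p : zmod_morphism (poly_at p).
Proof.
by move=> u w; rewrite /poly_at -sumrB; apply: eq_bigr => i _; rewrite raddfB mulrzBl.
Qed.

HB.instance Definition _ p :=
  GRing.isZmodMorphism.Build A A (poly_at p) (poly_at_zmod_morphism p).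

Lemma poly_at_widen n (p : {poly int}) v : (size p <= n)%N ->
  poly_at p v = \sum_(i < n) iter i x v *~ p`_i.
Proof.
move=> le_p_n; rewrite /poly_at (big_ord_widen n (fun i => iter i x v *~ p`_i)) //.
rewrite big_mkcond /=; apply: eq_bigr => i _; case: ifP => // /negbT.
by rewrite -leqNgt => le_p_i; rewrite nth_default // mulrz0.
Qed.

Lemma poly_atD p q v : poly_at (p + q) v = poly_at p v + poly_at q v.
Proof.
rewrite !(@poly_at_widen (maxn (size p) (size q))) ?size_polyD ?leq_maxl ?leq_maxr //.
by rewrite -big_split; apply: eq_bigr => i _; rewrite coefD mulrzDr.
Qed.

Lemma poly_atC c v : poly_at c%:P v = v *~ c.
Proof. by rewrite (@poly_at_widen 1) ?size_polyC ?leq_b1 // big_ord1 coefC. Qed.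

Lemma poly_atMX p v : poly_at (p * 'X) v = poly_at p (x v).
Proof.
rewrite (@poly_at_widen (size p).+1); last first.
  by rewrite (leq_trans (size_polyMleq p 'X)) // size_polyX addn2.
rewrite big_ord_recl coefMX /= mulr0z add0r.
by apply: eq_bigr => i _; rewrite coefMX /= -iterSr.
Qed.

Lemma poly_atCM c p v : poly_at (c%:P * p) v = poly_at p v *~ c.
Proof.
rewrite (@poly_at_widen (size p)); last by rewrite mul_polyC size_scale_leq.
by rewrite mulrz_suml; apply: eq_bigr => i _; rewrite coefCM mulrC mulrzA.
Qed.

Lemma poly_at_comm p v : x (poly_at p v) = poly_at p (x v).
Proof.
by rewrite raddf_sum; apply: eq_bigr => i _; rewrite raddfMz -iterSr.
Qed.

Lemma poly_atM p q v : poly_at (p * q) v = poly_at p (poly_at q v).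
Proof.
elim/poly_ind: p v => [|p c IH] v; first by rewrite mul0r /poly_at size_poly0 !big_ord0.
by rewrite mulrDl mulrAC !poly_atD !poly_atMX IH poly_atCM poly_atC poly_at_comm.
Qed.

Lemma poly_atXn m v : poly_at 'X^m v = iter m x v.
Proof.
elim: m v => [|m IH] v; first by rewrite expr0 -polyC1 poly_atC.
by rewrite exprSr poly_atMX IH -iterSr.
Qed.

End PolyAt.

Lemma poly_factor_Xn (R : nzRingType) (p : {poly R}) : p != 0 ->
  exists a (q : {poly R}), p = q * 'X^a /\ q`_0 != 0.
Proof.
move=> p_neq0; have ex_coef : exists i, p`_i != 0.
  by exists (size p).-1; rewrite -lead_coefE lead_coef_eq0.
case: (ex_minnP ex_coef) => a pa_neq0 min_a; exists a, (drop_poly a p); split.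
  rewrite -[LHS](poly_take_drop a p); suff -> : take_poly a p = 0 by rewrite add0r.
  apply/polyP => i; rewrite coef_take_poly coef0; case: ltnP => // lt_i_a.
  by apply: contraTeq lt_i_a => /min_a; rewrite -leqNgt.
by rewrite coef_drop_poly.
Qed.

Lemma coef0_Xn_bezout (R : comNzRingType) (q : {poly R}) m :
  exists u w : {poly R}, (q`_0 ^+ m)%:P = u * 'X^m + w * q.
Proof.
set c := q`_0; set r := drop_poly 1 q.
have def_q : q = c%:P - (- r * 'X).
  rewrite mulNr opprK -[LHS](poly_take_drop 1 q) expr1; congr (_ + _).
  by apply/polyP => i; rewrite coef_take_poly coefC; case: i.
exists ((- r) ^+ m), (\sum_(i < m) c%:P ^+ (m.-1 - i) * (- r * 'X) ^+ i).
rewrite [_ * q]mulrC def_q -subrXX -exprMn rmorphXn /=.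
by rewrite addrC subrK.
Qed.

Lemma int_coef0_Xn_bezout (q : {poly int}) m : q`_0 != 0 ->
  exists (N : nat) (u w : {poly int}), (0 < N)%N /\ N%:R = u * 'X^m + w * q.
Proof.
move=> q0_neq0; have [u [w def_cm]] := coef0_Xn_bezout q m.
exists (`|q`_0 ^+ m| ^ 2)%N, ((q`_0 ^+ m)%:P * u), ((q`_0 ^+ m)%:P * w).
split; first by rewrite expn_gt0 absz_gt0 expf_neq0.
rewrite -!mulrA -mulrDr -def_cm -polyCM -expr2 -polyC_natr natrX natz abszE.
by rewrite real_normK ?num_real.
Qed.

Lemma int_dependent_rows (N k : nat) (W : 'M[rat]_(N, k)) : (k < N)%N ->
  exists c : 'I_N -> int, (exists j, c j != 0) /\
    forall i, \sum_j (c j)%:~R * W j i = 0.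
Proof.
move=> lt_k_N; have : kermx W != 0.
  rewrite kermx_eq0; apply/negP => /eqP rkW.
  by have := rank_leq_col W; rewrite rkW leqNgt lt_k_N.
case/matrix0Pn => j0 [l0 u_neq0]; pose u l := kermx W j0 l.
have u_ker i : \sum_l u l * W l i = 0.
  by have := congr1 (fun M : 'M[rat]_(N, k) => M j0 i) (mulmx_ker W); rewrite !mxE.
pose D l := \prod_(l' < N | l' != l) denq (u l').
exists (fun l => numq (u l) * D l); split.
  exists l0; rewrite mulf_neq0 ?numq_eq0 //.
  by apply/prodf_neq0 => l' _; rewrite denq_neq0.
move=> i; have clear_den l :
    (numq (u l) * D l)%:~R = u l * (\prod_(l' < N) denq (u l'))%:~R :> rat.
  by rewrite intrM numqE (bigD1 l) //= intrM mulrA.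
under eq_bigr => l _ do rewrite clear_den mulrAC.
by rewrite -mulr_suml u_ker mul0r.
Qed.

Definition rat_spans (A : zmodType) (s : seq A) : Prop :=
  forall z : A, exists n : nat, (0 < n)%N /\
    exists c : 'I_(size s) -> int, z *+ n = \sum_(i < size s) s`_i *~ c i.

Section FiniteRank.
Variables (A : zmodType) (s : seq A).
Hypotheses (tfA : torsion_free A) (span_s : rat_spans s).

Lemma rat_spans_dependent (N : nat) (y : 'I_N -> A) : (size s < N)%N ->
  exists c : 'I_N -> int, (exists j, c j != 0) /\ \sum_(j < N) y j *~ c j = 0.
Proof.
move=> lt_s_N; have coord z : {nc : nat * ('I_(size s) -> int) | (0 < nc.1)%N /\
    z *+ nc.1 = \sum_(i < size s) s`_i *~ nc.2 i}.
  apply: constructive_indefinite_description.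
  by case: (span_s z) => n [n_gt0 [c def_z]]; exists (n, c).
pose n j := (sval (coord (y j))).1; pose d j := (sval (coord (y j))).2.
have def_y j : (0 < n j)%N /\ y j *+ n j = \sum_(i < size s) s`_i *~ d j i.
  exact: svalP (coord (y j)).
pose m j := (\prod_(l < N | l != j) n l)%N; pose L := (\prod_(l < N) n l)%N.
have def_L j : L = (n j * m j)%N by rewrite /L (bigD1 j).
pose W := \matrix_(j < N, i < size s) ((d j i * (m j)%:Z)%:~R : rat).
have [c [nz_c dep_c]] := int_dependent_rows W lt_s_N.
exists c; split => //; apply: (tfA (n := L)).
  by apply: prodn_gt0 => l; case: (def_y l).
have yL j : y j *~ c j *+ L = \sum_(i < size s) s`_i *~ (d j i * ((m j)%:Z * c j)).
  rewrite pmulrn -mulrzA (mulrC (c j)) mulrzA -pmulrn (def_L j) mulrnA.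
  case: (def_y j) => _ ->; rewrite pmulrn -mulrzA mulrz_suml.
  by apply: eq_bigr => i _; rewrite -!mulrzA.
rewrite -sumrMnl; under eq_bigr => j _ do rewrite yL.
rewrite exchange_big /=; apply: big1 => i _; rewrite -mulrz_sumr.
suff -> : \sum_(j < N) d j i * ((m j)%:Z * c j) = 0 by rewrite mulr0z.
apply: (@intr_inj rat); rewrite mulr0z -(dep_c i) rmorph_sum.
by apply: eq_bigr => j _; rewrite mxE !rmorphM /= mulrA mulrC.
Qed.

Variable x : {additive A -> A}.

Lemma annihilating_poly_at v : exists2 p : {poly int}, p != 0 & poly_at x p v = 0.
Proof.
have [c [[j0 cj0_neq0] dep_c]] :=
  @rat_spans_dependent (size s).+1 (fun j => iter j x v) (ltnSn _).
exists (\poly_(j < (size s).+1) c (inord j)).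
  apply/eqP => /(congr1 (fun q : {poly int} => q`_j0)) /eqP.
  by rewrite coef_poly ltn_ord inord_val coef0; apply/negP.
rewrite (@poly_at_widen _ _ (size s).+1) ?size_poly // -[RHS]dep_c.
by apply: eq_bigr => j _; rewrite coef_poly ltn_ord inord_val.
Qed.

Lemma annihilating_poly : exists2 p : {poly int}, p != 0 & forall v, poly_at x p v = 0.
Proof.
have [p p_neq0 p_s] :
    exists2 p : {poly int}, p != 0 & {in s, forall z, poly_at x p z = 0}.
  elim: s => [|y l [pl pl_neq0 pl_l]]; first by exists 1; rewrite ?oner_eq0.
  have [py py_neq0 py_y] := annihilating_poly_at y.
  exists (py * pl); first by rewrite mulf_neq0.
  move=> z; rewrite inE => /predU1P [->|/pl_l pl_z].
    by rewrite mulrC poly_atM py_y raddf0.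
  by rewrite poly_atM pl_z raddf0.
exists p => // v; have [n [n_gt0 [c def_v]]] := span_s v.
apply: (tfA n_gt0); rewrite -raddfMn def_v raddf_sum big1 // => i _.
by rewrite raddfMz /= p_s ?mem_nth // mul0rz.
Qed.

End FiniteRank.

Section Subgroups.
Variable A : zmodType.
Implicit Types (B : A -> Prop) (u v : A).

Lemma subgroup0 : subgroup (fun v : A => v = 0).
Proof. by split=> // u v -> ->; rewrite subrr. Qed.

Lemma subgroup_preim (f : {additive A -> A}) B :
  subgroup B -> subgroup (fun v => B (f v)).
Proof. by case=> B0 BB; split=> [|u v Bu Bv]; rewrite ?raddf0 ?raddfB //; apply: BB. Qed.

Lemma subgroupD B u v : subgroup B -> B u -> B v -> B (u + v).
Proof.
case=> B0 BB Bu Bv; have := BB u (0 - v) Bu (BB 0 v B0 Bv).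
by rewrite sub0r opprK.
Qed.

Lemma subgroupMn B v n : subgroup B -> B v -> B (v *+ n).
Proof.
move=> sB Bv; elim: n => [|n IH]; first by rewrite mulr0n; case: sB.
by rewrite mulrS; apply: subgroupD.
Qed.

Lemma nonzero_subPn B v : ~ nonzero_sub B -> B v -> v = 0.
Proof. by move=> zB Bv; apply: contra_not_eq zB => v_neq0; exists v. Qed.

Definition purify B v : Prop := exists2 n, (0 < n)%N & B (v *+ n).

Definition image (f : A -> A) B v : Prop := exists2 b, B b & v = f b.

Lemma purify_divn B n v : (0 < n)%N -> purify B (v *+ n) -> purify B v.
Proof.
by move=> n_gt0 [m m_gt0 Bvnm]; exists (n * m)%N; rewrite ?muln_gt0 ?n_gt0 // mulrnA.
Qed.

Lemma subgroup_purify B : subgroup B -> subgroup (purify B).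
Proof.
move=> sB; split; first by exists 1%N; rewrite // mul0rn; case: sB.
move=> u v [m m_gt0 Bum] [n n_gt0 Bvn]; exists (m * n)%N; first by rewrite muln_gt0 m_gt0.
rewrite mulrnBl mulrnA [(m * n)%N]mulnC mulrnA.
by case: (sB) => _; apply; apply: subgroupMn.
Qed.

Lemma pure_intro B : subgroup B ->
  (forall n v, (0 < n)%N -> B (v *+ n) -> B v) -> pure B.
Proof.
move=> sB divB; split=> // -[|n] v Bvn; last by exists v; split=> //; apply: divB Bvn.
by exists 0; rewrite !mulr0n; split=> //; case: sB.
Qed.

Lemma pure_purify B : subgroup B -> pure (purify B).
Proof.
by move=> sB; apply: pure_intro (subgroup_purify sB) _ => n v; apply: purify_divn.
Qed.

Lemma purify_pure B v : torsion_free A -> pure B -> purify B v -> B v.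
Proof.
move=> tfA [_ pB] [n n_gt0 /pB [b [Bb vn_eq]]]; suff -> : v = b by [].
by apply/eqP; rewrite -subr_eq0; apply/eqP/(tfA n) => //; rewrite mulrnBl vn_eq subrr.
Qed.

Lemma fully_invariant_purify B : fully_invariant B -> fully_invariant (purify B).
Proof.
case=> sB fB; split=> [|f v [n n_gt0 Bvn]]; first exact: subgroup_purify.
by exists n; rewrite // -raddfMn; apply: fB.
Qed.

Lemma fully_invariant_image (x : {additive A -> A}) B :
  end_central x -> fully_invariant B -> fully_invariant (image x B).
Proof.
move=> cx [[B0 BB] fB]; split; first split.
- by exists 0; rewrite ?raddf0.
- by move=> _ _ [u Bu ->] [v Bv ->]; exists (u - v); rewrite ?raddfB //; apply: BB.
- by move=> f _ [v Bv ->]; exists (f v); [apply: fB | rewrite [RHS]cx].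
Qed.

End Subgroups.

Section PseudoSocle.
Variables (A : zmodType) (x : {additive A -> A}).
Hypotheses (tfA : torsion_free A) (cx : end_central x).

Lemma min_pure_fi_purify_image B : min_pure_fi B ->
  (exists b, B b /\ x b != 0) -> forall b, B b -> purify (image x B) b.
Proof.
move=> [pB [fB [_ minB]]] [b0 [Bb0 xb0_neq0]].
have fxB := fully_invariant_image cx fB.
apply: minB => [|||v]; first exact: pure_purify fxB.1.
- exact: fully_invariant_purify.
- by exists (x b0); split=> //; exists 1%N => //; exists b0.
- move=> xBv; apply: purify_pure tfA pB _; case: xBv => n n_gt0 [b Bb vn_eq].
  by exists n; rewrite // vn_eq; apply: fB.2.
Qed.

Lemma PSoc_purify_im_sq : (forall v : A, PSoc v) ->
  forall v, purify (fun u => exists w, u = x (x w)) (x v).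
Proof.
move=> PSocA v; set S := fun u => exists w, u = x (x w).
have sS : subgroup S.
  by split=> [|_ _ [u ->] [w ->]]; [exists 0 | exists (u - w)]; rewrite ?raddf0 ?raddfB.
have sC := subgroup_preim x (subgroup_purify sS).
apply: (PSocA v _ (pure_intro sC _)) => [n u n_gt0|B minB b Bb].
  by rewrite raddfMn; apply: purify_divn.
have [nzxB|zxB] := classic (exists b, B b /\ x b != 0); last first.
  have -> : x b = 0 by apply: contra_not_eq zxB => xb_neq0; exists b.
  by case: (subgroup_purify sS).
have Bpx := min_pure_fi_purify_image minB nzxB.
have [n n_gt0 [b1 Bb1 bn_eq]] := Bpx b Bb.
have [m m_gt0 [b2 _ b1m_eq]] := Bpx b1 Bb1.
exists (n * m)%N; first by rewrite muln_gt0 n_gt0.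
by exists (x b2); rewrite -raddfMn mulrnA bn_eq -raddfMn b1m_eq.
Qed.

Lemma purify_im_sq_nilpotent m :
  (forall v, purify (fun u => exists w, u = x (x w)) (x v)) ->
  (forall v, iter m x v = 0) -> forall v, x v = 0.
Proof.
move=> px; elim: m => [|[|m] IH] xm0 v; first by move: (xm0 v) => /= ->; rewrite raddf0.
  exact: xm0.
apply: IH => {}v; have [n n_gt0 [w xvn_eq]] := px v.
by apply: (tfA n_gt0); rewrite iterSr -raddfMn xvn_eq /= -!iterSr xm0.
Qed.

End PseudoSocle.

Section Fitting.
Variables (A : zmodType) (x : {additive A -> A}).
Hypotheses (tfA : torsion_free A) (siA : strongly_indecomposable A).

Lemma strongly_indecomposable_coprime_ker (s t u w : {poly int}) (N : nat) :
  (0 < N)%N -> N%:R = u * s + w * t -> (forall v, poly_at x (s * t) v = 0) ->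
  (forall v, poly_at x s v = 0 -> v = 0) \/ (forall v, poly_at x t v = 0 -> v = 0).
Proof.
move=> N_gt0 bezout st0; set B := fun v => poly_at x s v = 0.
set D := fun v => poly_at x t v = 0.
have vN v : v *+ N = poly_at x (u * s) v + poly_at x (w * t) v.
  by rewrite -poly_atD -bezout -polyC_natr poly_atC natz -pmulrn.
have Dus v : D (poly_at x (u * s) v).
  by rewrite /D -poly_atM mulrCA [t * s]mulrC poly_atM st0 raddf0.
have Bwt v : B (poly_at x (w * t) v) by rewrite /B -poly_atM mulrCA poly_atM st0 raddf0.
have [nzB|zB] := classic (nonzero_sub B); last by left=> v; apply: nonzero_subPn zB.
have [nzD|zD] := classic (nonzero_sub D); last by right=> v; apply: nonzero_subPn zD.
have sK r : subgroup (fun v => poly_at x r v = 0) := subgroup_preim _ (subgroup0 A).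
case: siA; exists B, D; do 4![split; first by [apply: sK | ]]; split.
- by move=> v Bv Dv; apply: (tfA N_gt0); rewrite vN !poly_atM Bv Dv !raddf0 addr0.
- exists N; split=> // v.
  by exists (poly_at x (w * t) v), (poly_at x (u * s) v); rewrite addrC.
Qed.

End Fitting.

Lemma central_injective (A : zmodType) (x : {additive A -> A}) :
  torsion_free A -> finite_rank A -> strongly_indecomposable A ->
  (forall v : A, PSoc v) -> end_central x -> end_nonzero x ->
  forall v, x v = 0 -> v = 0.
Proof.
move=> tfA [s span_s] siA PSocA cx [v0 xv0_neq0].
have [p p_neq0 px0] := annihilating_poly tfA span_s x.
have [a [q [def_p q0_neq0]]] := poly_factor_Xn p_neq0.
have [N [u [w [N_gt0 bezout]]]] := int_coef0_Xn_bezout a.+1 q0_neq0.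
have Xq_x0 v : poly_at x ('X^(a.+1) * q) v = 0.
  by rewrite mulrC exprSr mulrA -def_p poly_atMX px0.
case: (strongly_indecomposable_coprime_ker tfA siA N_gt0 bezout Xq_x0) => [kerXn0|kerq0].
  by move=> v xv0; apply: kerXn0; rewrite poly_atXn iterSr xv0 raddf0.
have nil_x v : iter a.+1 x v = 0.
  by rewrite -poly_atXn; apply: kerq0; rewrite -poly_atM mulrC Xq_x0.
have px := PSoc_purify_im_sq tfA cx PSocA.
by rewrite (purify_im_sq_nilpotent tfA px nil_x) eqxx in xv0_neq0.
Qed.

Lemma centrally_essential_commutative (A : zmodType) :
  (forall x : {additive A -> A}, end_central x -> end_nonzero x ->
     forall v, x v = 0 -> v = 0) ->
  End_centrally_essential A -> End_commutative A.
Proof.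
move=> central_inj ceA f g v; have [nz_f|z_f] := classic (end_nonzero f); last first.
  have f0 u : f u = 0 by apply: contra_not_eq z_f; exists u.
  by rewrite /= !f0 raddf0.
have [y [z [cy [cz [nz_y [_ fy_z]]]]]] := ceA f nz_f.
have yC (h : {additive A -> A}) u : y (h u) = h (y u) := cy h u.
have fg_y u : f (g (y u)) = g (f (y u)).
  have fy w : f (y w) = z w := fy_z w.
  by rewrite -yC fy (cz g u : z (g u) = g (z u)) -fy.
apply/eqP; rewrite -subr_eq0; apply/eqP; apply: (central_inj y cy nz_y).
by rewrite raddfB /= !yC fg_y subrr.
Qed.

Lemma commutative_centrally_essential (A : zmodType) :
  End_commutative A -> End_centrally_essential A.
Proof.
move=> comA f [v fv_neq0]; exists idfun, f; do ![split] => //.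
- by exists v; apply: contraNneq fv_neq0 => /= ->; rewrite raddf0.
- by exists v.
Qed.

Theorem proposition3p3 (A : zmodType) :
  torsion_free A -> finite_rank A -> strongly_indecomposable A ->
  (forall x : A, PSoc x) ->
  (End_centrally_essential A <-> End_commutative A).
Proof.
move=> tfA frA siA PSocA; split; last exact: commutative_centrally_essential.
by apply: centrally_essential_commutative => x; apply: central_injective.
Qed.
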